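(* Let $\Gamma=\langle S\mid R\rangle$ be a finitely presented group and let $\varphi_n,\psi_n\colon S\to\mathrm U(k_n)$ be asymptotic representations with respect to a family of submultiplicative, unitarily invariant norms, such that $\max_{s\in S}\|\varphi_n(s)-\psi_n(s)\|=O_{\mathcal U}(\mathrm{def}(\varphi_n))$ and $\mathrm{def}(\psi_n)=o_{\mathcal U}(\mathrm{def}(\varphi_n))$. Then the $2$-cocycle $\alpha$ associated to $(\varphi_n)$ (described in the context) is trivial in $H^2(\Gamma,\mathrm M_{\mathcal U})$, i.e. there is $\beta\colon\Gamma\to\mathrm M_{\mathcal U}$ with $\alpha(g,h)=\varphi_{\mathcal U}(g)\beta(h)\varphi_{\mathcal U}(g)^*-\beta(gh)+\beta(g)$ for all $g,h\in\Gamma$.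
   Context: Fix a non-principal ultrafilter $\mathcal U$ on $\mathbb N$; $x_n=O_{\mathcal U}(y_n)$ means $x_n\le Cy_n$ for all $n$ in a set belonging to $\mathcal U$, some constant $C$; $x_n=o_{\mathcal U}(y_n)$ means $x_n=\varepsilon_ny_n$ with $\varepsilon_n\ge0$, $\lim_{n\to\mathcal U}\varepsilon_n=0$. $S,R$ are finite, $\mathbb F_S$ is free on $S$. For each $k$ a unitarily invariant, submultiplicative norm $\|\cdot\|$ on $\mathrm M_k(\mathbb C)$ is fixed. For $\varphi\colon S\to\mathrm U(k)$ (extended to $\mathbb F_S$), $\mathrm{def}(\varphi)=\max_{r\in R}\|\varphi(r)-1_k\|$; a sequence $\varphi_n\colon S\to\mathrm U(k_n)$ is an asymptotic representation if $\lim_{n\to\mathcal U}\mathrm{def}(\varphi_n)=0$. $\mathrm M_{\mathcal U}$ is the Banach space of bounded sequences $(T_n)$, $T_n\in\mathrm M_{k_n}(\mathbb C)$, modulo those with $\lim_{n\to\mathcal U}\|T_n\|=0$; $\mathrm U_{\mathcal U}$ is $\prod_n\mathrm U(k_n)$ modulo sequences with $\lim_{n\to\mathcal U}\|u_n-1\|=0$, acting on $\mathrm M_{\mathcal U}$ by left/right multiplication; $\varphi_{\mathcal U}\colon\Gamma\to\mathrm U_{\mathcal U}$ is the homomorphism induced by $(\varphi_n)$. The associated cocycle: fix a section $\sigma\colon\Gamma\to\mathbb F_S$ of the canonical surjection and $\tilde\varphi_n\colon\Gamma\to\mathrm U(k_n)$ with $\tilde\varphi_n(1_\Gamma)=1$,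 $\tilde\varphi_n(g^{-1})=\tilde\varphi_n(g)^*$, $\|\varphi_n(\sigma(g))-\tilde\varphi_n(g)\|=O_{\mathcal U}(\mathrm{def}(\varphi_n))$; let $c_n(g,h)=(\tilde\varphi_n(g)\tilde\varphi_n(h)-\tilde\varphi_n(gh))/\mathrm{def}(\varphi_n)$ if $\mathrm{def}(\varphi_n)>0$, else $0$, $c(g,h)\in\mathrm M_{\mathcal U}$ its class, and $\alpha(g,h)=c(g,h)\varphi_{\mathcal U}(gh)^*$. *)

From HB Require Import structures.
From mathcomp Require Import all_boot all_order all_algebra.
From mathcomp Require Import complex.
From mathcomp Require Import reals.
Set Implicit Arguments. Unset Strict Implicit. Unset Printing Implicit Defensive.
Import Order.TTheory GRing.Theory Num.Theory.
Local Open Scope ring_scope.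
Delimit Scope complex_scope with C.

Definition ultrafilter (U : (nat -> Prop) -> Prop) : Prop :=
  [/\ ~ U (fun _ => False),
      U (fun _ => True),
      (forall A B : nat -> Prop, (forall n, A n -> B n) -> U A -> U B),
      (forall A B : nat -> Prop, U A -> U B -> U (fun n => A n /\ B n))
    & (forall A : nat -> Prop, U A \/ U (fun n => ~ A n))].

Definition nonprincipal (U : (nat -> Prop) -> Prop) : Prop :=
  forall m : nat, ~ U (fun n => n = m).

Definition ulim0 {R : realType} (U : (nat -> Prop) -> Prop) (x : nat -> R) : Prop :=
  forall e : R, 0 < e -> U (fun n => `|x n| < e).

Definition bigO_U {R : realType} (U : (nat -> Prop) -> Prop) (x y : nat -> R) : Prop :=
  exists C : R, U (fun n => x n <= C * y n).

Definition littleo_U {R : realType} (U : (nat -> Prop) -> Prop) (x y : nat -> R) : Prop :=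
  exists eps : nat -> R, [/\ forall n, 0 <= eps n, ulim0 U eps & forall n, x n = eps n * y n].

Definition mxstar {R : realType} {k : nat} (A : 'M[R[i]]_k) : 'M[R[i]]_k :=
  \matrix_(i, j) conjc (A j i).

Definition unitary {R : realType} {k : nat} (A : 'M[R[i]]_k) : Prop :=
  mxstar A *m A = 1%:M /\ A *m mxstar A = 1%:M.

Definition ui_submult_norm {R : realType} {k : nat} (N : 'M[R[i]]_k -> R) : Prop :=
  (forall A, 0 <= N A) /\
  [/\ (forall A, N A = 0 -> A = 0),
      (forall A B, N (A + B) <= N A + N B),
      (forall (a : R[i]) A, ((N (a *: A))%:C)%C = `|a| * ((N A)%:C)%C),
      (forall A B, N (A *m B) <= N A * N B)
    & (forall U V A, unitary U -> unitary V -> N (U *m A *m V) = N A)].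

(* a letter (s, false) is s, (s, true) is s^{-1} *)
Definition word (S : finType) := seq (S * bool).

Definition inv_letter (S : finType) (x : S * bool) : S * bool := (x.1, ~~ x.2).

(* the congruence on words whose quotient is F_S / <<R>> *)
Inductive wcong (S : finType) (Rel : seq (word S)) : word S -> word S -> Prop :=
| wc_refl u : wcong Rel u u
| wc_sym u v : wcong Rel u v -> wcong Rel v u
| wc_trans u v w : wcong Rel u v -> wcong Rel v w -> wcong Rel u w
| wc_free u v x : wcong Rel (u ++ v) (u ++ [:: x; inv_letter x] ++ v)
| wc_rel u v r : r \in Rel -> wcong Rel (u ++ v) (u ++ r ++ v).

Record group := Group {
  gcarrier :> Type;
  gmul : gcarrier -> gcarrier -> gcarrier;
  ginv : gcarrier -> gcarrier;
  gone : gcarrier;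
  gmulA : forall x y z, gmul x (gmul y z) = gmul (gmul x y) z;
  gmul1 : forall x, gmul gone x = x;
  gmulV : forall x, gmul (ginv x) x = gone }.

Definition gword_eval (G : group) (S : finType) (gen : S -> G) (w : word S) : G :=
  foldr (fun x acc => gmul (if x.2 then ginv (gen x.1) else gen x.1) acc) (gone G) w.

(* G = < S | Rel > via the generating map gen : S -> G, i.e. the canonical
   map F_S -> G is onto with kernel the normal closure of Rel *)
Definition presents (G : group) (S : finType) (gen : S -> G) (Rel : seq (word S)) : Prop :=
  (forall g : G, exists w, gword_eval gen w = g) /\
  (forall u v : word S, gword_eval gen u = gword_eval gen v <-> wcong Rel u v).

Definition mx_eval {R : realType} {k : nat} (S : finType) (phi : S -> 'M[R[i]]_k)
  (w : word S) : 'M[R[i]]_k :=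
  foldr (fun x acc => (if x.2 then mxstar (phi x.1) else phi x.1) *m acc) 1%:M w.

Definition mdef {R : realType} {k : nat} (N : 'M[R[i]]_k -> R) (S : finType)
  (Rel : seq (word S)) (phi : S -> 'M[R[i]]_k) : R :=
  \big[Num.max/0]_(r <- Rel) N (mx_eval phi r - 1%:M).

Definition cocycle_c {R : realType} {k : nat} (G : group) (d : R)
  (phit : G -> 'M[R[i]]_k) (g h : G) : 'M[R[i]]_k :=
  if 0 < d then ((d^-1)%:C)%C *: (phit g *m phit h - phit (gmul g h)) else 0.

From HB Require Import structures.
From mathcomp Require Import all_boot all_order all_algebra.
From mathcomp Require Import complex.
From mathcomp Require Import reals.
Import Order.TTheory GRing.Theory Num.Theory.
Local Open Scope ring_scope.

(* Write d for def(phi_n), P_g for tilde-phi_n(g), F_g for phi_n(sigma g) and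
   Q_g for psi_n(sigma g).  A derivation of a relation in the presentation
   costs at most a multiple of the defect, so F is multiplicative up to O(d)
   and Q up to O(def psi_n) = o(d); moreover F - Q and F - P, hence P - Q and
   the multiplicativity defect of P, are O(d).  Take
   beta(g) = (P_g - Q_g) P_g^* / d.  Multiplied by d, alpha minus the
   coboundary of beta expands into five products of two O(d) factors plus
   (Q_g Q_h - Q_gh) P_gh^* = o(d), so the difference tends to 0 along U. *)

Section Unitary.
Context {R : realType} {m : nat}.
Implicit Types A B u v : 'M[R[i]]_m.

Lemma mxstarK A : mxstar (mxstar A) = A.
Proof. by apply/matrixP => i j; rewrite !mxE conjcK. Qed.

Lemma mxstarM A B : mxstar (A *m B) = mxstar B *m mxstar A.
Proof.
apply/matrixP => i j; rewrite !mxE rmorph_sum; apply: eq_bigr => l _.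
by rewrite !mxE rmorphM mulrC.
Qed.

Lemma mxstar1 : mxstar (1%:M : 'M[R[i]]_m) = 1%:M.
Proof. by apply/matrixP => i j; rewrite !mxE eq_sym rmorph_nat. Qed.

Lemma unitary1 : unitary (1%:M : 'M[R[i]]_m).
Proof. by rewrite /unitary mxstar1 mul1mx. Qed.

Lemma unitaryM {u v} : unitary u -> unitary v -> unitary (u *m v).
Proof.
move=> [u'u uu'] [v'v vv']; rewrite /unitary mxstarM; split.
  by rewrite mulmxA -(mulmxA _ _ u) u'u mulmx1.
by rewrite mulmxA -(mulmxA _ v) vv' mulmx1.
Qed.

Lemma unitary_mxstar {u} : unitary u -> unitary (mxstar u).
Proof. by move=> [u'u uu']; rewrite /unitary mxstarK. Qed.

End Unitary.

Section UnitarilyInvariantNorm.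
Context {R : realType} {m : nat} {N : 'M[R[i]]_m -> R}.
Hypothesis hN : ui_submult_norm N.
Implicit Types A B u v w : 'M[R[i]]_m.

Lemma uinorm_ge0 A : 0 <= N A.
Proof. by case: hN. Qed.

Lemma uinormD A B : N (A + B) <= N A + N B.
Proof. by case: hN => _ []. Qed.

Lemma uinormM A B : N (A *m B) <= N A * N B.
Proof. by case: hN => _ []. Qed.

Lemma uinormZ (c : R) A : 0 <= c -> N ((c%:C)%C *: A) = c * N A.
Proof.
case: hN => _ [_ _ NZ _ _] c_ge0; apply: (@complexI R).
by rewrite NZ rmorphM /= ger0_norm // ler0c.
Qed.

Lemma uinorm0 : N 0 = 0.
Proof. by rewrite -(scale0r (0 : 'M_m)) -[0 : R[i]]/((0 : R)%:C)%C uinormZ ?mul0r. Qed.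

Lemma uinormN A : N (- A) = N A.
Proof.
case: hN => _ [_ _ NZ _ _]; apply: (@complexI R).
by rewrite -scaleN1r NZ normrN1 mul1r.
Qed.

Lemma uinorm_distC A B : N (A - B) = N (B - A).
Proof. by rewrite -uinormN opprB. Qed.

Lemma uinorm_unitary_mull {u} A : unitary u -> N (u *m A) = N A.
Proof.
case: hN => _ [_ _ _ _ NU] u_unitary.
by have := NU u 1%:M A u_unitary unitary1; rewrite mulmx1.
Qed.

Lemma uinorm_unitary_mulr {u} A : unitary u -> N (A *m u) = N A.
Proof.
case: hN => _ [_ _ _ _ NU] u_unitary.
by have := NU 1%:M u A unitary1 u_unitary; rewrite mul1mx.
Qed.

Lemma uinorm_mxstarB {u v} : unitary u -> unitary v ->
  N (mxstar u - mxstar v) = N (u - v).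
Proof.
move=> u_unitary v_unitary.
have -> : mxstar u - mxstar v = mxstar u *m (v - u) *m mxstar v.
  case: u_unitary => u'u _; case: v_unitary => _ vv'.
  by rewrite mulmxBr mulmxBl -mulmxA vv' mulmx1 u'u mul1mx.
rewrite (uinorm_unitary_mulr _ (unitary_mxstar v_unitary)).
by rewrite (uinorm_unitary_mull _ (unitary_mxstar u_unitary)) uinorm_distC.
Qed.

Lemma uinorm_mul_mxstarB {u w} v : unitary u -> unitary w ->
  N (v *m mxstar w - mxstar u) = N (u *m v - w).
Proof.
move=> u_unitary w_unitary.
have -> : u *m v - w = u *m (v *m mxstar w - mxstar u) *m w.
  case: u_unitary => _ uu'; case: w_unitary => w'w _.
  by rewrite mulmxBr mulmxBl !mulmxA uu' mul1mx -!mulmxA w'w mulmx1.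
by rewrite uinorm_unitary_mulr // uinorm_unitary_mull.
Qed.

Lemma uinorm_mxstar_sub_mul {u v w} : unitary u -> unitary v -> unitary w ->
  N (mxstar w - mxstar v *m mxstar u) = N (u *m v - w).
Proof.
move=> u_unitary v_unitary w_unitary.
by rewrite -mxstarM uinorm_mxstarB 1?uinorm_distC //; apply: unitaryM.
Qed.

End UnitarilyInvariantNorm.

Section WordEvaluation.
Context {R : realType} {m : nat} {S : finType}.
Implicit Types (phi psi : S -> 'M[R[i]]_m) (u v w : word S).

Definition letter phi (x : S * bool) := if x.2 then mxstar (phi x.1) else phi x.1.

Lemma mx_eval_cons phi x w : mx_eval phi (x :: w) = letter phi x *m mx_eval phi w.
Proof. by []. Qed.

Lemma mx_eval_cat phi u v : mx_eval phi (u ++ v) = mx_eval phi u *m mx_eval phi v.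
Proof. by elim: u => [|x u IH]; rewrite ?mul1mx // cat_cons !mx_eval_cons IH mulmxA. Qed.

Lemma unitary_letter {phi} x : (forall s, unitary (phi s)) -> unitary (letter phi x).
Proof. by move=> phi_unitary; rewrite /letter; case: x.2; [apply: unitary_mxstar|]. Qed.

Lemma unitary_mx_eval {phi} w : (forall s, unitary (phi s)) -> unitary (mx_eval phi w).
Proof.
move=> phi_unitary; elim: w => [|x w IH]; first exact: unitary1.
by rewrite mx_eval_cons; apply: unitaryM => //; apply: unitary_letter.
Qed.

Lemma mx_eval_cancel {phi} x : (forall s, unitary (phi s)) ->
  mx_eval phi [:: x; inv_letter x] = 1%:M.
Proof.
move=> phi_unitary; rewrite !mx_eval_cons mulmx1 /letter /=.
by case: x => s [] /=; case: (phi_unitary s).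
Qed.

Lemma mdef_ge0 N Rel phi : 0 <= mdef N Rel phi.
Proof. exact: bigmax_ge_id. Qed.

Lemma mdef_ge N Rel phi r : r \in Rel ->
  N (mx_eval phi r - 1%:M) <= mdef N Rel phi.
Proof.
move=> r_in.
exact: (@le_bigmax_seq _ R _ Rel 0 r xpredT (fun r => N (mx_eval phi r - 1%:M))).
Qed.

Lemma mx_eval_distB {N phi psi} w : ui_submult_norm N ->
  (forall s, unitary (phi s)) -> (forall s, unitary (psi s)) ->
  N (mx_eval phi w - mx_eval psi w)
    <= (size w)%:R * \big[Num.max/0]_(s : S) N (phi s - psi s).
Proof.
move=> hN phi_unitary psi_unitary.
have letter_dist x : N (letter phi x - letter psi x)
    <= \big[Num.max/0]_(s : S) N (phi s - psi s).
  rewrite /letter; case: x.2; rewrite ?uinorm_mxstarB //; exact: le_bigmax.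
elim: w => [|x w IH]; first by rewrite subrr uinorm0 // mul0r.
have -> : mx_eval phi (x :: w) - mx_eval psi (x :: w)
    = (letter phi x - letter psi x) *m mx_eval phi w
      + letter psi x *m (mx_eval phi w - mx_eval psi w).
  by rewrite !mx_eval_cons mulmxBl mulmxBr addrA subrK.
apply: le_trans (uinormD hN _ _) _.
rewrite (uinorm_unitary_mulr hN _ (unitary_mx_eval w phi_unitary)).
rewrite (uinorm_unitary_mull hN _ (unitary_letter x psi_unitary)).
by rewrite [size _]/= -add1n natrD mulrDl mul1r; apply: lerD.
Qed.

End WordEvaluation.

Lemma mx_eval_wcong (R : realType) {S : finType} {Rel : seq (word S)} {u v} :
  wcong Rel u v -> exists c : nat, forall m (N : 'M[R[i]]_m -> R) phi,
    ui_submult_norm N -> (forall s, unitary (phi s)) ->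
    N (mx_eval phi u - mx_eval phi v) <= c%:R * mdef N Rel phi.
Proof.
elim=> {u v} [u | u v _ [c IH] | u v w _ [c1 IH1] _ [c2 IH2] | u v x | u v r r_in].
- by exists 0%N => m N phi hN _; rewrite subrr uinorm0 // mul0r.
- by exists c => m N phi hN phi_unitary; rewrite uinorm_distC // IH.
- exists (c1 + c2)%N => m N phi hN phi_unitary.
  rewrite -(subrKA (mx_eval phi v)) natrD mulrDl.
  by apply: le_trans (uinormD hN _ _) _; apply: lerD; [apply: IH1 | apply: IH2].
- exists 0%N => m N phi hN phi_unitary.
  by rewrite catA !mx_eval_cat mx_eval_cancel // mulmx1 subrr uinorm0 // mul0r.
- exists 1%N => m N phi hN phi_unitary; rewrite mul1r.
  have -> : mx_eval phi (u ++ v) - mx_eval phi (u ++ r ++ v)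
      = mx_eval phi u *m (1%:M - mx_eval phi r) *m mx_eval phi v.
    by rewrite !mx_eval_cat mulmxBr mulmxBl mulmx1 mulmxA.
  rewrite (uinorm_unitary_mulr hN _ (unitary_mx_eval v phi_unitary)).
  rewrite (uinorm_unitary_mull hN _ (unitary_mx_eval u phi_unitary)).
  by rewrite uinorm_distC // mdef_ge.
Qed.

Lemma gword_eval_cat (G : group) (S : finType) (gen : S -> G) u v :
  gword_eval gen (u ++ v) = gmul (gword_eval gen u) (gword_eval gen v).
Proof. by elim: u => [|x u IH] /=; rewrite ?gmul1 // -gmulA -IH. Qed.

Lemma presents_section_mul {G : group} {S : finType} {gen : S -> G} {Rel}
    {sigma : G -> word S} g h :
  presents gen Rel -> (forall g, gword_eval gen (sigma g) = g) ->
  wcong Rel (sigma g ++ sigma h) (sigma (gmul g h)).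
Proof. by move=> [_ hpres] hsigma; apply/hpres; rewrite gword_eval_cat !hsigma. Qed.

Lemma mx_eval_section_mul (R : realType) {G : group} {S : finType} {gen : S -> G}
    {Rel} {sigma : G -> word S} g h :
  presents gen Rel -> (forall g, gword_eval gen (sigma g) = g) ->
  exists c : nat, forall m (N : 'M[R[i]]_m -> R) phi,
    ui_submult_norm N -> (forall s, unitary (phi s)) ->
    N (mx_eval phi (sigma g) *m mx_eval phi (sigma h) - mx_eval phi (sigma (gmul g h)))
      <= c%:R * mdef N Rel phi.
Proof.
move=> hpres hsigma; have [c hc] := mx_eval_wcong R (presents_section_mul g h hpres hsigma).
by exists c => m N phi hN phi_unitary; rewrite -mx_eval_cat; apply: hc.
Qed.

Lemma cocycle_cE {R : realType} {m} {G : group} (c : R) (phit : G -> 'M[R[i]]_m) g h :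
  0 <= c -> cocycle_c c phit g h = ((c^-1)%:C)%C *: (phit g *m phit h - phit (gmul g h)).
Proof.
rewrite /cocycle_c; case: ifPn => // c_ngt0 c_ge0.
have -> : c = 0 by apply/eqP; rewrite eq_le c_ge0 andbT leNgt.
by rewrite invr0 rmorph0 scale0r.
Qed.

(* Read (p, q, r, s, t, u, f) as (P_g, P_h, P_gh, Q_g, Q_h, Q_gh, F_g) and a
   primed letter as the adjoint of the corresponding matrix, w' standing for
   F_gh^*; no relation between the letters is needed. *)
Lemma coboundary_defect_expansion {K : pzRingType} {m}
    (p q r s t u f w' p' q' r' f' : 'M[K]_m) :
  (p *m q - r) *m w' - (f *m ((q - t) *m q') *m f' - (r - u) *m r' + (p - s) *m p')
  = (p *m q - r) *m (w' - r')
    - ((f - p) *m ((q - t) *m q') *m f' + p *m ((q - t) *m q') *m (f' - p'))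
    + (s *m t - u) *m r'
    + p *m (q - t) *m (r' - q' *m p')
    + (p - s) *m (t *m r' - p').
Proof.
set x := (q - t) *m q'.
have -> : (f - p) *m x *m f' + p *m x *m (f' - p') = f *m x *m f' - p *m x *m p'.
  by rewrite !mulmxBl mulmxBr addrA subrK.
have -> : p *m (q - t) *m (r' - q' *m p') = p *m (q - t) *m r' - p *m x *m p'.
  by rewrite mulmxBr !mulmxA.
have -> : (s *m t - u) *m r' = (p *m q - r) *m r' + (r - u) *m r'
                               - (p *m (q - t) *m r' + (p - s) *m t *m r').
  have pq_sub_u : (p *m q - r) + (r - u) = p *m (q - t) + (p - s) *m t + (s *m t - u).
    by rewrite mulmxBr mulmxBl !subrKA.
  by rewrite -mulmxDl pq_sub_u !mulmxDl addrAC subrr add0r.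
rewrite [(p *m q - r) *m (w' - r')]mulmxBr [(p - s) *m (_ - p')]mulmxBr mulmxA.
rewrite !opprD !opprK !addrA.
by rewrite [RHS](ACl (1*3*6*12*((2*5)*(4*10)*(7*9)*(8*11)))) /= addNr subrr !addNr !addr0.
Qed.

Section Asymptotics.
Context {R : realType} (U : (nat -> Prop) -> Prop) (N : forall m : nat, 'M[R[i]]_m -> R).
Context {k : nat -> nat} (d : nat -> R).
Hypotheses (hU : ultrafilter U) (hN : forall m : nat, ui_submult_norm (N m)).
Hypotheses (d_ge0 : forall n, 0 <= d n) (d_lim0 : ulim0 U d).
Implicit Types X Y V : forall n, 'M[R[i]]_(k n).

Lemma ufilterT : U (fun _ => True).
Proof. by case: hU. Qed.

Lemma ufilterS {A B : nat -> Prop} : U A -> (forall n, A n -> B n) -> U B.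
Proof. by case: hU => _ _ mono _ _ hA AB; apply: mono hA. Qed.

Lemma ufilterI {A B : nat -> Prop} : U A -> U B -> U (fun n => A n /\ B n).
Proof. by case: hU => _ _ _ + _; apply. Qed.

Lemma bigO_U_refl : bigO_U U d d.
Proof. by exists 1; apply: (ufilterS ufilterT) => n _; rewrite mul1r. Qed.

Definition bigOd X := bigO_U U (fun n => N (k n) (X n)) d.

Definition littleod X := forall e, 0 < e -> U (fun n => N (k n) (X n) <= e * d n).

Lemma bigOd_le {X Y} : bigOd X ->
  (forall n, N (k n) (Y n) <= N (k n) (X n)) -> bigOd Y.
Proof. by move=> [C hX] YX; exists C; apply: (ufilterS hX) => n; apply: le_trans (YX n). Qed.

Lemma littleod_le {X Y} : littleod X ->
  (forall n, N (k n) (Y n) <= N (k n) (X n)) -> littleod Y.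
Proof. by move=> hX YX e /hX hXe; apply: (ufilterS hXe) => n; apply: le_trans (YX n). Qed.

Lemma bigOdD {X Y} : bigOd X -> bigOd Y -> bigOd (fun n => X n + Y n).
Proof.
move=> [C1 hX] [C2 hY]; exists (C1 + C2).
apply: (ufilterS (ufilterI hX hY)) => n [Xn Yn].
by apply: le_trans (uinormD (hN _) _ _) _; rewrite mulrDl lerD.
Qed.

Lemma littleodD {X Y} : littleod X -> littleod Y -> littleod (fun n => X n + Y n).
Proof.
move=> hX hY e e_gt0; have e2_gt0 : 0 < e / 2 by rewrite divr_gt0.
apply: (ufilterS (ufilterI (hX _ e2_gt0) (hY _ e2_gt0))) => n [Xn Yn].
apply: le_trans (uinormD (hN _) _ _) _.
by rewrite [e in e * _](splitr e) mulrDl lerD.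
Qed.

Lemma bigOdN {X} : bigOd X -> bigOd (fun n => - X n).
Proof. by move=> hX; apply: (bigOd_le hX) => n; rewrite uinormN. Qed.

Lemma littleodN {X} : littleod X -> littleod (fun n => - X n).
Proof. by move=> hX; apply: (littleod_le hX) => n; rewrite uinormN. Qed.

Lemma littleodB {X Y} : littleod X -> littleod Y -> littleod (fun n => X n - Y n).
Proof. by move=> hX /littleodN; apply: littleodD. Qed.

Lemma bigOd_mull {V X} : (forall n, unitary (V n)) ->
  bigOd X -> bigOd (fun n => V n *m X n).
Proof. by move=> V_unitary hX; apply: (bigOd_le hX) => n; rewrite uinorm_unitary_mull. Qed.

Lemma bigOd_mulr {V X} : (forall n, unitary (V n)) ->
  bigOd X -> bigOd (fun n => X n *m V n).
Proof. by move=> V_unitary hX; apply: (bigOd_le hX) => n; rewrite uinorm_unitary_mulr. Qed.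

Lemma littleod_mulr {V X} : (forall n, unitary (V n)) ->
  littleod X -> littleod (fun n => X n *m V n).
Proof. by move=> V_unitary hX; apply: (littleod_le hX) => n; rewrite uinorm_unitary_mulr. Qed.

Lemma bigOd_mxstarB {X Y} : (forall n, unitary (X n)) -> (forall n, unitary (Y n)) ->
  bigOd (fun n => X n - Y n) -> bigOd (fun n => mxstar (X n) - mxstar (Y n)).
Proof.
by move=> X_unitary Y_unitary hXY; apply: (bigOd_le hXY) => n; rewrite uinorm_mxstarB.
Qed.

Lemma littleod_bigOdM {X Y} : bigOd X -> bigOd Y -> littleod (fun n => X n *m Y n).
Proof.
move=> [C1 hX] [C2 hY] e e_gt0.
pose K := `|C1| * `|C2| + 1.
have K_gt0 : 0 < K by rewrite ltr_wpDl ?mulr_ge0.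
have d_small := d_lim0 _ (divr_gt0 e_gt0 K_gt0).
apply: (ufilterS (ufilterI (ufilterI hX hY) d_small)) => n [[Xn Yn]].
rewrite ger0_norm // ltr_pdivlMr // => dK.
have le_abs C Z : N (k n) Z <= C * d n -> N (k n) Z <= `|C| * d n.
  by move=> /le_trans; apply; rewrite ler_wpM2r ?ler_norm.
apply: le_trans (uinormM (hN _) _ _) _.
apply: le_trans (ler_pM (uinorm_ge0 (hN _) _) (uinorm_ge0 (hN _) _)
  (le_abs _ _ Xn) (le_abs _ _ Yn)) _.
rewrite mulrACA mulrA ler_wpM2r //; apply: le_trans (ltW dK).
by rewrite mulrC ler_wpM2l // lerDl.
Qed.

Lemma bigOd_of_bigO {x : nat -> R} {c : R} {X} : 0 <= c ->
  (forall n, N (k n) (X n) <= c * x n) -> bigO_U U x d -> bigOd X.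
Proof.
move=> c_ge0 Xx [C hx]; exists (c * C); apply: (ufilterS hx) => n xn.
by apply: le_trans (Xx n) _; rewrite -mulrA ler_wpM2l.
Qed.

Lemma littleod_of_littleo {x : nat -> R} {c : R} {X} : 0 <= c ->
  (forall n, N (k n) (X n) <= c * x n) -> littleo_U U x d -> littleod X.
Proof.
move=> c_ge0 Xx [eps [eps_ge0 eps_lim0 x_eps]] e e_gt0.
have c1_gt0 : 0 < c + 1 by rewrite ltr_wpDl.
apply: (ufilterS (eps_lim0 _ (divr_gt0 e_gt0 c1_gt0))) => n.
rewrite ger0_norm // ltr_pdivlMr // => eps_small.
apply: le_trans (Xx n) _; rewrite x_eps mulrA ler_wpM2r //.
by apply: le_trans (ltW eps_small); rewrite mulrC ler_wpM2l // lerDl.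
Qed.

Lemma bigOd_scale_bounded {X} : bigOd X ->
  exists C, U (fun n => N (k n) ((((d n)^-1)%:C)%C *: X n) <= C).
Proof.
move=> [C hX]; exists `|C|; apply: (ufilterS hX) => n Xn.
rewrite uinormZ ?invr_ge0 //.
have [->|dn_neq0] := eqVneq (d n) 0; first by rewrite invr0 mul0r.
have dn_gt0 : 0 < d n by rewrite lt_def dn_neq0 d_ge0.
rewrite ler_pdivrMl //; apply: le_trans Xn _.
by rewrite mulrC ler_wpM2l ?ler_norm.
Qed.

Lemma littleod_scale_lim0 {X} : littleod X ->
  ulim0 U (fun n => N (k n) ((((d n)^-1)%:C)%C *: X n)).
Proof.
move=> hX e e_gt0; have e2_gt0 : 0 < e / 2 by rewrite divr_gt0.
apply: (ufilterS (hX _ e2_gt0)) => n Xn.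
rewrite ger0_norm ?uinorm_ge0 // uinormZ ?invr_ge0 //.
have [->|dn_neq0] := eqVneq (d n) 0; first by rewrite invr0 mul0r.
have dn_gt0 : 0 < d n by rewrite lt_def dn_neq0 d_ge0.
rewrite ltr_pdivrMl //; apply: le_lt_trans Xn _.
by rewrite mulrC ltr_pM2l // ltr_pdivrMr // ltr_pMr // ltr1n.
Qed.

Lemma mx_eval_distB_bigOd {S : finType} {phi psi : forall n, S -> 'M[R[i]]_(k n)} w :
  (forall n s, unitary (phi n s)) -> (forall n s, unitary (psi n s)) ->
  bigO_U U (fun n => \big[Num.max/0]_(s : S) N (k n) (phi n s - psi n s)) d ->
  bigOd (fun n => mx_eval (phi n) w - mx_eval (psi n) w).
Proof.
move=> phi_unitary psi_unitary close.
by apply: (bigOd_of_bigO (ler0n _ (size w)) _ close) => n; apply: mx_eval_distB.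
Qed.

Section Presentation.
Context {G : group} {S : finType} (gen : S -> G) (Rel : seq (word S)) (sigma : G -> word S).
Hypotheses (hpres : presents gen Rel) (hsigma : forall g, gword_eval gen (sigma g) = g).
Implicit Types phi : forall n, S -> 'M[R[i]]_(k n).

Lemma mx_eval_section_mul_bigOd {phi} g h : (forall n s, unitary (phi n s)) ->
  bigO_U U (fun n => mdef (N (k n)) Rel (phi n)) d ->
  bigOd (fun n => mx_eval (phi n) (sigma g) *m mx_eval (phi n) (sigma h)
                  - mx_eval (phi n) (sigma (gmul g h))).
Proof.
have [c hc] := mx_eval_section_mul R g h hpres hsigma.
move=> phi_unitary def_bigO.
by apply: (bigOd_of_bigO (ler0n _ c) _ def_bigO) => n; apply: hc.
Qed.

Lemma mx_eval_section_mul_littleod {phi} g h : (forall n s, unitary (phi n s)) ->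
  littleo_U U (fun n => mdef (N (k n)) Rel (phi n)) d ->
  littleod (fun n => mx_eval (phi n) (sigma g) *m mx_eval (phi n) (sigma h)
                     - mx_eval (phi n) (sigma (gmul g h))).
Proof.
have [c hc] := mx_eval_section_mul R g h hpres hsigma.
move=> phi_unitary def_littleo.
by apply: (littleod_of_littleo (ler0n _ c) _ def_littleo) => n; apply: hc.
Qed.

End Presentation.

Section CoboundaryDefect.
Context {G : group} (P F Q : forall n, G -> 'M[R[i]]_(k n)).
Hypotheses (P_unitary : forall n g, unitary (P n g)) (F_unitary : forall n g, unitary (F n g)).
Hypotheses (F_sub_P : forall g, bigOd (fun n => F n g - P n g))
           (F_sub_Q : forall g, bigOd (fun n => F n g - Q n g)).
Hypothesis F_mul : forall g h, bigOd (fun n => F n g *m F n h - F n (gmul g h)).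
Hypothesis Q_mul : forall g h, littleod (fun n => Q n g *m Q n h - Q n (gmul g h)).

Lemma P_sub_Q_bigOd g : bigOd (fun n => P n g - Q n g).
Proof.
apply: (bigOd_le (bigOdD (bigOdN (F_sub_P g)) (F_sub_Q g))) => n.
by rewrite opprB subrKA.
Qed.

Lemma P_mul_bigOd g h : bigOd (fun n => P n g *m P n h - P n (gmul g h)).
Proof.
have FP_P := bigOd_mulr (P_unitary^~ h) (bigOdN (F_sub_P g)).
have F_FP := bigOd_mull (F_unitary^~ g) (bigOdN (F_sub_P h)).
apply: (bigOd_le (bigOdD (bigOdD (bigOdD FP_P F_FP) (F_mul g h)) (F_sub_P (gmul g h)))).
by move=> n; rewrite !opprB mulmxBl mulmxBr !addrA !subrK.
Qed.

Definition beta0 n g := (P n g - Q n g) *m mxstar (P n g).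

Lemma beta0_bigOd g : bigOd (fun n => beta0 n g).
Proof. exact: bigOd_mulr (fun n => unitary_mxstar (P_unitary n g)) (P_sub_Q_bigOd g). Qed.

Definition coboundary_defect n g h :=
  (P n g *m P n h - P n (gmul g h)) *m mxstar (F n (gmul g h))
  - (F n g *m beta0 n h *m mxstar (F n g) - beta0 n (gmul g h) + beta0 n g).

Lemma coboundary_defect_littleod g h : littleod (fun n => coboundary_defect n g h).
Proof.
have F_sub_P_star g' := bigOd_mxstarB (F_unitary^~ g') (P_unitary^~ g') (F_sub_P g').
have P_star_mul : bigOd (fun n =>
    mxstar (P n (gmul g h)) - mxstar (P n h) *m mxstar (P n g)).
  by apply: (bigOd_le (P_mul_bigOd g h)) => n; rewrite uinorm_mxstar_sub_mul.
have P_mul_star : bigOd (fun n =>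
    P n h *m mxstar (P n (gmul g h)) - mxstar (P n g)).
  by apply: (bigOd_le (P_mul_bigOd g h)) => n; rewrite uinorm_mul_mxstarB.
have Q_mul_star : bigOd (fun n =>
    Q n h *m mxstar (P n (gmul g h)) - mxstar (P n g)).
  apply: (bigOd_le (bigOdD (bigOd_mulr (fun n => unitary_mxstar (P_unitary n (gmul g h)))
                                       (bigOdN (P_sub_Q_bigOd h))) P_mul_star)) => n.
  by rewrite opprB mulmxBl addrA subrK.
have a_F_star := littleod_bigOdM (P_mul_bigOd g h) (F_sub_P_star (gmul g h)).
have F_beta0 := littleod_mulr (fun n => unitary_mxstar (F_unitary n g))
                              (littleod_bigOdM (F_sub_P g) (beta0_bigOd h)).
have beta0_F_star :=
  littleod_bigOdM (bigOd_mull (P_unitary^~ g) (beta0_bigOd h)) (F_sub_P_star g).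
have Q_defect :=
  littleod_mulr (fun n => unitary_mxstar (P_unitary n (gmul g h))) (Q_mul g h).
have P_star_defect :=
  littleod_bigOdM (bigOd_mull (P_unitary^~ g) (P_sub_Q_bigOd h)) P_star_mul.
have Q_star_defect := littleod_bigOdM (P_sub_Q_bigOd g) Q_mul_star.
apply: (littleod_le (littleodD (littleodD (littleodD
  (littleodB a_F_star (littleodD F_beta0 beta0_F_star)) Q_defect) P_star_defect)
  Q_star_defect)).
by move=> n; rewrite /coboundary_defect /beta0 coboundary_defect_expansion.
Qed.

Definition beta g n := (((d n)^-1)%:C)%C *: beta0 n g.

Lemma beta_bounded g : exists C, U (fun n => N (k n) (beta g n) <= C).
Proof. exact: bigOd_scale_bounded (beta0_bigOd g). Qed.

Lemma cocycle_c_sub_coboundary n g h :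
  cocycle_c (d n) (P n) g h *m mxstar (F n (gmul g h))
  - (F n g *m beta h n *m mxstar (F n g) - beta (gmul g h) n + beta g n)
  = (((d n)^-1)%:C)%C *: coboundary_defect n g h.
Proof.
rewrite cocycle_cE // /beta /coboundary_defect.
by rewrite -scalemxAl -scalemxAr -scalemxAl -scalerBr -scalerDr -scalerBr.
Qed.

Lemma cocycle_c_coboundary g h : ulim0 U (fun n => N (k n)
  (cocycle_c (d n) (P n) g h *m mxstar (F n (gmul g h))
   - (F n g *m beta h n *m mxstar (F n g) - beta (gmul g h) n + beta g n))).
Proof.
move=> e e_gt0.
apply: (ufilterS (littleod_scale_lim0 (coboundary_defect_littleod g h) e e_gt0)) => n.
by rewrite cocycle_c_sub_coboundary.
Qed.

End CoboundaryDefect.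

End Asymptotics.

Theorem proposition3p7
  (R : realType)
  (U : (nat -> Prop) -> Prop) (hU : ultrafilter U) (hUnp : nonprincipal U)
  (G : group) (S : finType) (gen : S -> G) (Rel : seq (word S))
  (hpres : presents gen Rel)
  (N : forall m : nat, 'M[R[i]]_m -> R) (hN : forall m, ui_submult_norm (N m))
  (k : nat -> nat)
  (phi psi : forall n, S -> 'M[R[i]]_(k n))
  (hphiU : forall n s, unitary (phi n s)) (hpsiU : forall n s, unitary (psi n s))
  (hphi : ulim0 U (fun n => mdef (N (k n)) Rel (phi n)))
  (hpsi : ulim0 U (fun n => mdef (N (k n)) Rel (psi n)))
  (hclose : bigO_U U
     (fun n => \big[Num.max/0]_(s : S) N (k n) (phi n s - psi n s))
     (fun n => mdef (N (k n)) Rel (phi n)))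
  (hdefpsi : littleo_U U
     (fun n => mdef (N (k n)) Rel (psi n))
     (fun n => mdef (N (k n)) Rel (phi n)))
  (sigma : G -> word S) (hsigma : forall g, gword_eval gen (sigma g) = g)
  (phit : forall n, G -> 'M[R[i]]_(k n))
  (hphitU : forall n g, unitary (phit n g))
  (hphit1 : forall n, phit n (gone G) = 1%:M)
  (hphitV : forall n g, phit n (ginv g) = mxstar (phit n g))
  (hphitO : forall g, bigO_U U
     (fun n => N (k n) (mx_eval (phi n) (sigma g) - phit n g))
     (fun n => mdef (N (k n)) Rel (phi n))) :
  let phiU := fun n (g : G) => mx_eval (phi n) (sigma g) in
  let alpha := fun n (g h : G) =>
    cocycle_c (mdef (N (k n)) Rel (phi n)) (phit n) g h *m mxstar (phiU n (gmul g h)) in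
  exists beta : G -> forall n, 'M[R[i]]_(k n),
    (forall g, exists C : R, U (fun n => N (k n) (beta g n) <= C)) /\
    (forall g h : G, ulim0 U (fun n =>
       N (k n) (alpha n g h -
         (phiU n g *m beta h n *m mxstar (phiU n g) - beta (gmul g h) n + beta g n)))).
Proof.
move=> F alpha.
pose d n := mdef (N (k n)) Rel (phi n).
pose Q n g := mx_eval (psi n) (sigma g).
have d_ge0 n : 0 <= d n by apply: mdef_ge0.
have F_unitary n g : unitary (F n g) by apply: unitary_mx_eval.
have F_sub_Q g : bigOd U N d (fun n => F n g - Q n g) by apply: mx_eval_distB_bigOd.
have F_mul g h : bigOd U N d (fun n => F n g *m F n h - F n (gmul g h)).
  exact: (mx_eval_section_mul_bigOd U N d hU hN gen Rel sigma hpres hsigma g h hphiU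
           (bigO_U_refl U d hU)).
have Q_mul g h : littleod U N d (fun n => Q n g *m Q n h - Q n (gmul g h)).
  exact: (mx_eval_section_mul_littleod U N d hU hN d_ge0 gen Rel sigma hpres hsigma g h hpsiU
           hdefpsi).
exists (beta d phit Q); split.
  exact: (beta_bounded U N d hU hN d_ge0 phit F Q hphitU hphitO F_sub_Q).
exact: (cocycle_c_coboundary U N d hU hN d_ge0 hphi phit F Q hphitU F_unitary hphitO F_sub_Q
          F_mul Q_mul).
Qed.
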